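(* Let $t$ be a positive integer, $r$ a positive integer and $g\in\{0,1\}$. Let $$A_{r,g}(z)=\sum_{m=0}^{r}\binom{r-g+\frac14}{m}\binom{2r-g-m}{r-g}(-z)^m,\qquad B_{r,g}(z)=\sum_{m=0}^{r-g}\binom{r-\frac14}{m}\binom{2r-g-m}{r}(-z)^m,$$ and define the binary forms $A^*_{r,g}(X,Y)=X^{r}A_{r,g}(Y/X)$ and $B^*_{r,g}(X,Y)=X^{r-g}B_{r,g}(Y/X)$. For integers $x,y$ put $\Xi(x,y)=4(1+\sqrt{-t})(x-\sqrt{-t}\,y)^4$ and $H(x,y)=4(\sqrt{-t}-1)(x+\sqrt{-t}\,y)^4$. Then for every pair of integers $(x,y)$, both $A^*_{r,g}\big(\Xi(x,y),\,\Xi(x,y)-H(x,y)\big)$ and $B^*_{r,g}\big(\Xi(x,y),\,\Xi(x,y)-H(x,y)\big)$ are algebraic integers in $\mathbb{Q}(\sqrt{-t})$.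
   Context: For real $a$ and a nonnegative integer $m$, $\binom{a}{m}=a(a-1)\cdots(a-m+1)/m!$. The degrees of $A_{r,g}$ and $B_{r,g}$ are $r$ and $r-g$ respectively. $\Xi$ and $H$ are the fourth powers $\xi^4,\eta^4$ of the resolvent forms; one has $\Xi-H=8P(x,y)$ with $P(x,y)=x^{4}+4tx^{3}y-6tx^{2}y^{2}-4t^{2}xy^{3}+t^{2}y^{4}$. *)

From HB Require Import structures.
From mathcomp Require Import all_boot all_order all_algebra all_field.
Set Implicit Arguments. Unset Strict Implicit. Unset Printing Implicit Defensive.
Import Order.TTheory GRing.Theory Num.Theory.
Local Open Scope ring_scope.

Definition gbinom (a : algC) (m : nat) : algC :=
  (\prod_(i < m) (a - i%:R)) / (m`!)%:R.

Definition acoef (r g m : nat) : algC :=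
  gbinom ((r - g)%:R + 1/4) m * ('C(2 * r - g - m, r - g))%:R.
Definition bcoef (r g m : nat) : algC :=
  gbinom (r%:R - 1/4) m * ('C(2 * r - g - m, r))%:R.

Definition A_rg (r g : nat) (z : algC) : algC :=
  \sum_(m < r.+1) acoef r g m * (- z) ^+ m.
Definition B_rg (r g : nat) (z : algC) : algC :=
  \sum_(m < (r - g).+1) bcoef r g m * (- z) ^+ m.

(* Homogenizations as binary forms: A*(X,Y) = X^r A(Y/X), B*(X,Y) = X^(r-g) B(Y/X) *)
Definition Astar (r g : nat) (X Y : algC) : algC :=
  \sum_(m < r.+1) acoef r g m * (- Y) ^+ m * X ^+ (r - m).
Definition Bstar (r g : nat) (X Y : algC) : algC :=
  \sum_(m < (r - g).+1) bcoef r g m * (- Y) ^+ m * X ^+ (r - g - m).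

Definition sqrtmt (t : nat) : algC := sqrtC (- t%:R).

Definition Xi (t : nat) (x y : int) : algC :=
  4 * (1 + sqrtmt t) * (x%:~R - sqrtmt t * y%:~R) ^+ 4.
Definition Hf (t : nat) (x y : int) : algC :=
  4 * (sqrtmt t - 1) * (x%:~R + sqrtmt t * y%:~R) ^+ 4.

Definition in_Qsqrt (t : nat) (z : algC) : Prop :=
  exists a b : rat, z = ratr a + ratr b * sqrtmt t.

From HB Require Import structures.
From mathcomp Require Import all_boot all_order all_algebra all_field.
From mathcomp Require Import zify ring.
Set Implicit Arguments.
Unset Strict Implicit.
Unset Printing Implicit Defensive.
Import Order.TTheory GRing.Theory Num.Theory.
Local Open Scope ring_scope.

(** With [s = sqrt(-t)], the forms [Xi] and [H] lie in [Z[s]] and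
   [Xi - H = 8 P(x, y)] with [P] an integer form.  Both binary forms have
   coefficients [binom(c/4, m) * C] with [c] an integer, [C] natural and [m]
   the exponent of the second variable, so it suffices that
   [8^m binom(c/4, m)] is an integer.  Its denominator divides [m!]: the
   odd part of [m!] divides [prod_(i<m) (c - 4 i)] because [4] is invertible
   modulo an odd number, which turns the product into [4^m m! binom(k, m)]
   modulo it, and the [2]-part of [m!] is at most [2^m] by Legendre's
   formula.  As [Z[s]] is a ring of algebraic integers inside [Q(s)], the
   theorem follows. *)

Lemma sum_divn_exp2_le (m n : nat) :
  (\sum_(1 <= k < n.+1) m %/ 2 ^ k + m %/ 2 ^ n <= m)%N.
Proof.
elim: n => [|n IH]; first by rewrite big_geq // expn0 divn1.
rewrite big_nat_recr //= expnSr divnMA.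
have := leq_divM (m %/ 2 ^ n) 2.
move: IH; set S := (\sum_(_ <= _ < _) _)%N; set a := (m %/ 2 ^ n)%N.
clearbody S a; lia.
Qed.

Lemma logn2_fact_le (m : nat) : (logn 2 m`! <= m)%N.
Proof.
rewrite logn_fact //; apply: leq_trans (sum_divn_exp2_le m m); exact: leq_addr.
Qed.

Lemma prod_addMr_cong (M : int) (m : nat) (a b : nat -> int) :
  exists q, \prod_(i < m) (a i + M * b i) = \prod_(i < m) a i + M * q.
Proof.
elim: m => [|m [q IH]]; first by exists 0; rewrite !big_ord0; ring.
exists (q * (a m + M * b m) + (\prod_(i < m) a i) * b m).
rewrite !big_ord_recr /= IH; ring.
Qed.

(* For [M = 2a + 1] one has [4 a (a + 1) = M^2 - 1], so [-a (a + 1)] is an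
   inverse of [4] modulo [M]; adding a multiple of [M] makes [k] large. *)
Lemma exists_mul4_cong_odd (M m : nat) (c : int) : odd M ->
  exists (k : nat) (j : int), (m <= k)%N /\ c = 4 * k%:Z + M%:Z * j.
Proof.
move=> oM; set a := M./2.
have hM : M%:Z = 2 * a%:Z + 1.
  by rewrite -[in LHS](odd_double_half M) oM /a; lia.
set k0 : int := - c * a%:Z * (a%:Z + 1).
set N : int := (`|k0|%N)%:Z + m%:Z.
have k_ge : m%:Z <= k0 + M%:Z * N by rewrite /N; clearbody k0; rewrite hM; nia.
exists (absz (k0 + M%:Z * N)), (c * M%:Z - 4 * N); split; first lia.
rewrite gez0_abs; last lia.
rewrite /k0 hM; ring.
Qed.

Lemma dvdz_fact_prod_mul4_sub (k m : nat) : (m <= k)%N ->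
  ((m`!)%:Z %| \prod_(i < m) (4 * (k%:Z - i%:Z)))%Z.
Proof.
move=> le_mk.
have -> : \prod_(i < m) (4 * (k%:Z - i%:Z)) = 4 ^+ m * (k ^_ m)%:Z.
  rewrite big_split /= prodr_const card_ord; congr (_ * _).
  rewrite ffact_prod (big_morph Posz PoszM (erefl 1%:Z)).
  by apply: eq_bigr => i _; rewrite subzn //; have := ltn_ord i; lia.
by apply: dvdz_mull; rewrite -bin_ffact PoszM; apply: dvdz_mull; rewrite dvdzE.
Qed.

Lemma odd_dvdz_prod_sub_mul4 (M m : nat) (c : int) : odd M -> (M %| m`!)%N ->
  (M%:Z %| \prod_(i < m) (c - 4 * i%:Z))%Z.
Proof.
move=> oM dvd_M_fact.
have [k [j [le_mk ->]]] := exists_mul4_cong_odd m c oM.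
have -> : \prod_(i < m) (4 * k%:Z + M%:Z * j - 4 * i%:Z)
          = \prod_(i < m) (4 * (k%:Z - i%:Z) + M%:Z * j).
  by apply: eq_bigr => i _; ring.
have [q ->] := prod_addMr_cong M%:Z m (fun i => 4 * (k%:Z - i%:Z)) (fun _ => j).
rewrite rpredD //; last exact/dvdz_mulr/dvdzz.
by apply: dvdz_trans (dvdz_fact_prod_mul4_sub le_mk); rewrite dvdzE.
Qed.

Lemma fact_dvdz_exp2_prod_sub_mul4 (m : nat) (c : int) :
  ((m`!)%:Z %| 2 ^+ m * \prod_(i < m) (c - 4 * i%:Z))%Z.
Proof.
have [M coM2 Efact] := pfactor_coprime (isT : prime 2) (fact_gt0 m).
have oM : odd M by rewrite -coprime2n.
have /odd_dvdz_prod_sub_mul4 : (M %| m`!)%N by rewrite Efact dvdn_mulr.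
move=> /(_ c oM); rewrite dvdzE /= => dvd_M_prod.
rewrite dvdzE abszM abszX /= Efact Gauss_dvd; last by rewrite coprime_sym coprimeXl.
rewrite dvdn_mull //; exact/dvdn_mulr/dvdn_exp2l/logn2_fact_le.
Qed.

Lemma gbinom_quarter_mul_exp8 (m : nat) (c : int) :
  exists q : int, 8 ^+ m * gbinom (c%:~R / 4) m = q%:~R.
Proof.
have /dvdzP [q hq] := fact_dvdz_exp2_prod_sub_mul4 m c.
exists q.
have Eprod : 8 ^+ m * \prod_(i < m) (c%:~R / 4 - i%:R : algC)
          = (2 ^+ m * \prod_(i < m) (c - 4 * i%:Z))%:~R.
  rewrite rmorphM rmorphXn rmorph_prod /=.
  have -> : (8 : algC) ^+ m = 2 ^+ m * 4 ^+ m by rewrite -exprMn; congr (_ ^+ _); ring.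
  rewrite -mulrA; congr (_ * _).
  rewrite -[in X in X * _](card_ord m) -prodr_const -big_split /=.
  by apply: eq_bigr => i _; rewrite rmorphB rmorphM /=; field.
rewrite /gbinom mulrA Eprod hq rmorphM /= -[X in _ / X]/((m`!%:Z)%:~R).
by rewrite mulfK // intr_eq0 -lt0n fact_gt0.
Qed.

Definition in_Zsqrt (t : nat) (z : algC) : Prop :=
  exists a b : int, z = a%:~R + b%:~R * sqrtmt t.

Section IntegersOfQsqrt.
Variable t : nat.
Local Notation s := (sqrtmt t).

Lemma sqrtmt_sqr : s ^+ 2 = - t%:R.
Proof. exact: sqrtCK. Qed.

Lemma in_Zsqrt_int (n : int) : in_Zsqrt t n%:~R.
Proof. by exists n, 0; rewrite mul0r addr0. Qed.

Lemma in_Zsqrt_nat (n : nat) : in_Zsqrt t n%:R.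
Proof. exact: (in_Zsqrt_int n). Qed.

Lemma in_Zsqrt_sqrtmt : in_Zsqrt t s.
Proof. by exists 0, 1; rewrite add0r mul1r. Qed.

Lemma in_ZsqrtD u v : in_Zsqrt t u -> in_Zsqrt t v -> in_Zsqrt t (u + v).
Proof.
move=> [a [b ->]] [a' [b' ->]]; exists (a + a'), (b + b').
by rewrite !rmorphD /=; ring.
Qed.

Lemma in_ZsqrtN u : in_Zsqrt t u -> in_Zsqrt t (- u).
Proof. by move=> [a [b ->]]; exists (- a), (- b); rewrite !rmorphN /=; ring. Qed.

Lemma in_ZsqrtM u v : in_Zsqrt t u -> in_Zsqrt t v -> in_Zsqrt t (u * v).
Proof.
move=> [a [b ->]] [a' [b' ->]].
exists (a * a' - t%:Z * b * b'), (a * b' + b * a').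
have Et : t%:R = - s ^+ 2 by rewrite sqrtmt_sqr opprK.
by rewrite !(rmorphD, rmorphB, rmorphN, rmorphM) /= -pmulrn Et; ring.
Qed.

Lemma in_ZsqrtX u n : in_Zsqrt t u -> in_Zsqrt t (u ^+ n).
Proof.
move=> Zu; elim: n => [|n IHn]; first exact: (in_Zsqrt_int 1).
by rewrite exprS; apply: in_ZsqrtM.
Qed.

Lemma in_Zsqrt_sum I (r : seq I) (P : pred I) (F : I -> algC) :
  (forall i, P i -> in_Zsqrt t (F i)) -> in_Zsqrt t (\sum_(i <- r | P i) F i).
Proof.
move=> ZF; apply: (big_ind (in_Zsqrt t)) => //; first exact: (in_Zsqrt_int 0).
exact: in_ZsqrtD.
Qed.

Lemma sqrtmt_Aint : s \in Aint.
Proof.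
have root_s : root ('X^2 + (t%:R)%:P) s by rewrite rootE !hornerE sqrtmt_sqr addNr.
apply: root_monic_Aint root_s _ _; first exact: monicXnaddC.
by rewrite polyOverXnaddC natr_int.
Qed.

Lemma in_Zsqrt_Aint u : in_Zsqrt t u -> u \in Aint.
Proof.
have intr_Aint (n : int) : (n%:~R : algC) \in Aint by apply/Aint_Cint/intr_int.
by move=> [a [b ->]]; rewrite rpredD ?rpredM // sqrtmt_Aint.
Qed.

Lemma in_Zsqrt_Qsqrt u : in_Zsqrt t u -> in_Qsqrt t u.
Proof. by move=> [a [b ->]]; exists a%:Q, b%:Q; rewrite !rmorph_int. Qed.

Lemma in_Zsqrt_quarter_term (c P : int) (C m n : nat) X : in_Zsqrt t X ->
  in_Zsqrt t (gbinom (c%:~R / 4) m * C%:R * (- (8 * P%:~R)) ^+ m * X ^+ n).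
Proof.
move=> ZX; have [q Eq] := gbinom_quarter_mul_exp8 m c.
have -> : gbinom (c%:~R / 4) m * C%:R * (- (8 * P%:~R)) ^+ m * X ^+ n
          = (8 ^+ m * gbinom (c%:~R / 4) m) * C%:R * (- P%:~R) ^+ m * X ^+ n.
  by rewrite -mulrN exprMn; ring.
rewrite Eq; apply/in_ZsqrtM/in_ZsqrtX => //.
apply/in_ZsqrtM; last exact/in_ZsqrtX/in_ZsqrtN/in_Zsqrt_int.
exact/in_ZsqrtM/in_Zsqrt_nat/in_Zsqrt_int.
Qed.

Lemma in_Zsqrt_Astar (r g : nat) (P : int) X : in_Zsqrt t X ->
  in_Zsqrt t (Astar r g X (8 * P%:~R)).
Proof.
move=> ZX; apply: in_Zsqrt_sum => m _; rewrite /acoef.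
have -> : (r - g)%:R + 1 / 4 = (4 * (r - g)%:Z + 1)%:~R / 4 :> algC.
  by rewrite rmorphD rmorphM /=; field.
exact: in_Zsqrt_quarter_term.
Qed.

Lemma in_Zsqrt_Bstar (r g : nat) (P : int) X : in_Zsqrt t X ->
  in_Zsqrt t (Bstar r g X (8 * P%:~R)).
Proof.
move=> ZX; apply: in_Zsqrt_sum => m _; rewrite /bcoef.
have -> : r%:R - 1 / 4 = (4 * r%:Z - 1)%:~R / 4 :> algC.
  by rewrite rmorphB rmorphM /=; field.
exact: in_Zsqrt_quarter_term.
Qed.

Definition Pform (x y : int) : int :=
  x ^+ 4 + 4 * t%:Z * x ^+ 3 * y - 6 * t%:Z * x ^+ 2 * y ^+ 2
  - 4 * t%:Z ^+ 2 * x * y ^+ 3 + t%:Z ^+ 2 * y ^+ 4.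

Lemma Xi_sub_Hf (x y : int) : Xi t x y - Hf t x y = 8 * (Pform x y)%:~R.
Proof.
have Et : t%:R = - s ^+ 2 by rewrite sqrtmt_sqr opprK.
rewrite /Xi /Hf /Pform.
by rewrite !(rmorphD, rmorphB, rmorphN, rmorphM, rmorphXn) /= -pmulrn Et; ring.
Qed.

Lemma in_Zsqrt_Xi (x y : int) : in_Zsqrt t (Xi t x y).
Proof.
have Zs := in_Zsqrt_sqrtmt.
apply: in_ZsqrtM; last apply: in_ZsqrtX.
  by apply: in_ZsqrtM (in_Zsqrt_nat 4) (in_ZsqrtD (in_Zsqrt_nat 1) Zs).
by apply: in_ZsqrtD (in_Zsqrt_int x) (in_ZsqrtN (in_ZsqrtM Zs (in_Zsqrt_int y))).
Qed.

End IntegersOfQsqrt.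

Theorem lemma5p1 (t r g : nat) (ht : (0 < t)%N) (hr : (0 < r)%N) (hg : (g <= 1)%N)
  (x y : int) :
  (Astar r g (Xi t x y) (Xi t x y - Hf t x y) \in Aint /\
   in_Qsqrt t (Astar r g (Xi t x y) (Xi t x y - Hf t x y))) /\
  (Bstar r g (Xi t x y) (Xi t x y - Hf t x y) \in Aint /\
   in_Qsqrt t (Bstar r g (Xi t x y) (Xi t x y - Hf t x y))).
Proof.
rewrite Xi_sub_Hf.
have ZA := in_Zsqrt_Astar r g (Pform t x y) (in_Zsqrt_Xi t x y).
have ZB := in_Zsqrt_Bstar r g (Pform t x y) (in_Zsqrt_Xi t x y).
by split; split; [apply: in_Zsqrt_Aint ZA | apply: in_Zsqrt_Qsqrt ZA
                 | apply: in_Zsqrt_Aint ZB | apply: in_Zsqrt_Qsqrt ZB].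
Qed.
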